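(* For every prime $p$ and every integer $k$ with $1\le k\le p$, \[ \overline{M}_k(p)=p\,f_k(p)-f_k(1)+\sum_{j=2}^{p} f_k\!\left(\left\lfloor \frac{p}{j}\right\rfloor\right). \]
   Context: For a nonempty finite set $A$ of positive integers, $(A)$ denotes the greatest common divisor of the elements of $A$. For $m,k\in\mathbb{N}$, $f_k(m)$ is the number of $k$-element subsets $A\subseteq\{1,2,\ldots,m\}$ with $(A)=1$ (so $f_k(m)=0$ if $m<k$). For $1\le k\le n$, \[ \overline{M}_k(n)=\sum_{\substack{A\subseteq\{1,\ldots,n\},\ \#A=k\\ \gcd((A),n)=1}}\gcd((A)-1,n), \] with the convention $\gcd(0,n)=n$. *)

From mathcomp Require Import all_boot all_order all_algebra.
Set Implicit Arguments. Unset Strict Implicit. Unset Printing Implicit Defensive.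

(* Subsets of {1,...,m} are represented as sets A : {set 'I_m.+1} with 0 \notin A. *)

(* gcd (A) of the elements of a finite set of naturals (gcd of the empty set is 0). *)
Definition setgcd (m : nat) (A : {set 'I_m.+1}) : nat := \big[gcdn/0]_(x in A) val x.

Definition posset (m : nat) (A : {set 'I_m.+1}) : bool := (ord0 \notin A).

Definition fk (k m : nat) : nat :=
  #|[set A : {set 'I_m.+1} | [&& posset A, #|A| == k & setgcd A == 1]]|.

(* \overline{M}_k(n); gcdn 0 n = n realizes the convention gcd(0,n)=n *)
Definition Mbar (k n : nat) : nat :=
  \sum_(A : {set 'I_n.+1} | [&& posset A, #|A| == k & coprime (setgcd A) n])
     gcdn (setgcd A).-1 n.

From mathcomp Require Import all_boot all_order all_algebra.
From mathcomp Require Import zify.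

Set Implicit Arguments.
Unset Strict Implicit.
Unset Printing Implicit Defensive.

(* Sort the k-subsets A of {1,...,n} by the value d = (A) of their
   gcd, which lies in [1, n] as soon as k >= 1.  Multiplication by d is a
   bijection from the k-subsets of {1,...,n/d} with gcd 1 onto the k-subsets of
   {1,...,n} with gcd d, so exactly f_k(n/d) subsets have gcd d.  Since the
   summand of Mbar_k(n) depends on A only through d, namely it is
   w_n(d) = [gcd(d,n) = 1] gcd(d-1,n), this gives for every n
        Mbar_k(n) = sum_(1 <= d <= n) f_k(n/d) w_n(d).
   For a prime p the weights are w_p(1) = p, w_p(d) = 1 for 1 < d < p and
   w_p(p) = 0; together with f_k(p/p) = f_k(1) this is the theorem. *)

Lemma setgcd_dvd n (A : {set 'I_n.+1}) a : a \in A -> setgcd A %| val a.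
Proof. by move=> aA; rewrite /setgcd (bigD1 a) //= dvdn_gcdl. Qed.

Lemma setgcd_bounds n (A : {set 'I_n.+1}) :
  posset A -> 0 < #|A| -> 0 < setgcd A <= n.
Proof.
move=> PA; rewrite card_gt0 => /set0Pn [a aA].
have a_gt0 : 0 < val a.
  rewrite lt0n; apply: contraTneq PA => a0.
  by rewrite /posset negbK -[ord0](@val_inj _ _ _ a) //.
have gA_a := setgcd_dvd aA.
apply/andP; split; last by rewrite (leq_trans (dvdn_leq a_gt0 gA_a)) // -ltnS ltn_ord.
by rewrite lt0n; apply: contraTneq gA_a => ->; rewrite dvd0n -lt0n.
Qed.

Section Scaling.
Variables n d : nat.
Hypothesis d_gt0 : 0 < d.

Definition scale (x : 'I_(n %/ d).+1) : 'I_n.+1 := inord (x * d).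

(* scale does multiply by d: x * d <= (n / d) * d <= n, so inord does not wrap. *)
Lemma scaleE x : val (scale x) = x * d.
Proof.
rewrite /scale /= inordK // ltnS (leq_trans _ (leq_divM n d)) // leq_mul2r.
by rewrite -ltnS ltn_ord orbT.
Qed.

Lemma scale_inj : injective scale.
Proof.
move=> x y /(congr1 val); rewrite !scaleE => /eqP.
by rewrite eqn_mul2r gtn_eqF //= => /eqP /val_inj.
Qed.

(* Since scale fixes 0 and is injective, images avoid 0 exactly when sets do. *)
Lemma posset_scale (B : {set 'I_(n %/ d).+1}) : posset (scale @: B) = posset B.
Proof.
have scale0 : scale ord0 = ord0 by apply: val_inj; rewrite scaleE.
by rewrite /posset -scale0 (mem_imset _ _ scale_inj).
Qed.

Lemma setgcd_scale (B : {set 'I_(n %/ d).+1}) :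
  setgcd (scale @: B) = setgcd B * d.
Proof.
rewrite /setgcd big_imset /=; last by move=> x y _ _; apply: scale_inj.
under eq_bigr do rewrite scaleE.
by rewrite (big_morph (fun x => x * d) (fun a b => muln_gcdl a b d) (mul0n d)).
Qed.

(* All elements of a set whose gcd is d are multiples of d, so such a set is
   the image under scale of its preimage. *)
Lemma scale_preimage (A : {set 'I_n.+1}) :
  setgcd A = d -> A = scale @: [set x | scale x \in A].
Proof.
move=> gA; apply/setP=> a; apply/idP/imsetP => [aA | [x + ->]]; last by rewrite inE.
have /dvdnP [q a_eq] : d %| val a by rewrite -gA setgcd_dvd.
have q_lt : q < (n %/ d).+1.
  rewrite ltnS -(mulnK q d_gt0) -a_eq leq_div2r // -ltnS.
  exact: ltn_ord.
have scale_q : scale (Ordinal q_lt) = a by apply: val_inj; rewrite scaleE.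
by exists (Ordinal q_lt); rewrite // inE scale_q.
Qed.

Lemma card_setgcd_eq k :
  #|[set A : {set 'I_n.+1} | [&& posset A, #|A| == k & setgcd A == d]]|
    = fk k (n %/ d).
Proof.
rewrite /fk -(card_imset _ (imset_inj scale_inj)); apply: eq_card => A.
rewrite inE; apply/idP/imsetP => [/and3P [PA cA /eqP gA] | [B + ->]].
  have A_eq := scale_preimage gA; set B := [set x | _] in A_eq.
  exists B => //; move: PA cA gA; rewrite inE A_eq.
  rewrite posset_scale (card_imset _ scale_inj) setgcd_scale => -> -> /eqP /=.
  by rewrite -[X in _ == X]mul1n eqn_mul2r gtn_eqF.
rewrite !inE => /and3P [PB cB /eqP gB].
by rewrite posset_scale (card_imset _ scale_inj) setgcd_scale PB cB gB mul1n eqxx.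
Qed.

End Scaling.

Lemma sum_by_setgcd n k (F : nat -> nat) : 0 < k ->
  \sum_(A : {set 'I_n.+1} | posset A && (#|A| == k)) F (setgcd A)
    = \sum_(1 <= d < n.+1) fk k (n %/ d) * F d.
Proof.
move=> k_gt0.
transitivity (\sum_(A : {set 'I_n.+1} | posset A && (#|A| == k))
                \sum_(1 <= d < n.+1 | d == setgcd A) F d).
  apply: eq_bigr => A /andP [PA /eqP cA].
  have := setgcd_bounds PA; rewrite cA => /(_ k_gt0) gA_bounds.
  by rewrite big_nat1_eq ltnS gA_bounds.
rewrite (exchange_big_dep xpredT) //=; apply: eq_big_nat => d /andP [d_gt0 _].
rewrite sum_nat_const -(card_setgcd_eq _ d_gt0); congr (_ * _).
by apply: eq_card => A; rewrite inE unfold_in /= -andbA [d == _]eq_sym.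
Qed.

Definition Mbar_weight (n d : nat) : nat :=
  if coprime d n then gcdn d.-1 n else 0.

Lemma Mbar_by_setgcd n k : 0 < k ->
  Mbar k n = \sum_(1 <= d < n.+1) fk k (n %/ d) * Mbar_weight n d.
Proof.
move=> k_gt0; rewrite -sum_by_setgcd // /Mbar.
rewrite (eq_bigl (fun A => (posset A && (#|A| == k)) && coprime (setgcd A) n));
  last by move=> A; rewrite andbA.
by rewrite big_mkcondr.
Qed.

Lemma Mbar_weight1 n : Mbar_weight n 1 = n.
Proof. by rewrite /Mbar_weight coprime1n gcd0n. Qed.

Lemma Mbar_weightnn n : 1 < n -> Mbar_weight n n = 0.
Proof. by move=> n_gt1; rewrite /Mbar_weight /coprime gcdnn gtn_eqF. Qed.

(* For 1 < d < p both d and d - 1 are coprime to the prime p. *)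
Lemma Mbar_weight_prime p d : prime p -> 1 < d < p -> Mbar_weight p d = 1.
Proof.
move=> p_prime /andP [d_gt1 d_ltp].
have coprime_lt m : 0 < m < p -> coprime m p.
  by case/andP=> m_gt0 m_ltp; rewrite coprime_sym prime_coprime // gtnNdvd.
rewrite /Mbar_weight coprime_lt; last by rewrite d_ltp ltnW.
by apply/eqP/coprime_lt; lia.
Qed.

Lemma Mbar_prime p k : prime p -> 0 < k ->
  Mbar k p + fk k 1 = p * fk k p + \sum_(2 <= j < p.+1) fk k (p %/ j).
Proof.
move=> p_prime k_gt0; have p_gt1 := prime_gt1 p_prime.
rewrite Mbar_by_setgcd // (@big_ltn _ _ _ 1 p.+1 _ (prime_gt0 p_prime)).
rewrite !big_nat_recr //= Mbar_weight1 Mbar_weightnn // divn1 divnn prime_gt0 //=.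
rewrite (@eq_big_nat _ _ _ _ _ _ (fun d => fk k (p %/ d))); first lia.
by move=> d d_range; rewrite Mbar_weight_prime ?muln1.
Qed.

Local Open Scope ring_scope.

Theorem mainTheorem6 (p k : nat) (hp : prime p) (hk1 : (1 <= k)%N) (hkp : (k <= p)%N) :
  (Mbar k p)%:Z =
    (p * fk k p)%:Z - (fk k 1)%:Z + \sum_(2 <= j < p.+1) (fk k (p %/ j))%:Z.
Proof.
have := congr1 Posz (Mbar_prime hp hk1).
by rewrite -(big_morph Posz PoszD (erefl 0%:Z)) !PoszD; lia.
Qed.
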